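(* Let $V$ be a real symmetric $d\times d$ matrix and $W$ a complex Hermitian $d\times d$ matrix such that $V\ge W$ (i.e. $V-W$ is positive semidefinite). Then $$\mathrm{tr}\,V\;\ge\;\mathrm{tr}\,\mathrm{Re}\,W+\mathrm{tr}\,|\mathrm{Im}\,W|.$$
   Context: For a complex matrix $W$, $\bar W$ denotes the entrywise complex conjugate, $\mathrm{Re}\,W=(W+\bar W)/2$ and $\mathrm{Im}\,W=(W-\bar W)/(2i)$; for a Hermitian $W$, $\mathrm{Re}\,W$ is real symmetric and $\mathrm{Im}\,W$ is real antisymmetric. For any matrix $A$, $|A|=(A^*A)^{1/2}$. *)

(* Complex matrices are matrices over an abstract
   numClosedFieldType C (a model of the complex numbers, e.g. algC or
   R[i] for a real closed field R). *)
From HB Require Import structures.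
From mathcomp Require Import all_boot all_order all_algebra.
Set Implicit Arguments. Unset Strict Implicit. Unset Printing Implicit Defensive.
Import Order.TTheory GRing.Theory Num.Theory Num.Def.
Local Open Scope ring_scope.

Section MatDefs.
Variable C : numClosedFieldType.

Definition conj_mx m n (A : 'M[C]_(m, n)) : 'M[C]_(m, n) := map_mx conjC A.

Definition adj_mx m n (A : 'M[C]_(m, n)) : 'M[C]_(n, m) := (conj_mx A)^T.

Definition hermitian_mx n (A : 'M[C]_n) : Prop := adj_mx A = A.

Definition real_symmetric_mx n (A : 'M[C]_n) : Prop :=
  (forall i j, A i j \is Num.real) /\ A^T = A.

Definition psd_mx n (A : 'M[C]_n) : Prop :=
  hermitian_mx A /\ forall v : 'cV[C]_n, 0 <= (adj_mx v *m A *m v) 0 0.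

Definition Re_mx n (W : 'M[C]_n) : 'M[C]_n := 2^-1 *: (W + conj_mx W).
Definition Im_mx n (W : 'M[C]_n) : 'M[C]_n := (2 * 'i)^-1 *: (W - conj_mx W).

(* |A| = (A^* A)^{1/2}: the positive semidefinite square root of the
   (normal, indeed PSD) matrix A^* A, built from its spectral decomposition
   A^* A = P^-1 diag(d) P (P unitary, d >= 0) as P^-1 diag(sqrt d) P. *)
Definition abs_mx n (A : 'M[C]_n) : 'M[C]_n :=
  let M := adj_mx A *m A in
  invmx (spectralmx M) *m diag_mx (map_mx sqrtC (spectral_diag M)) *m spectralmx M.

End MatDefs.

(* Put A := V - W >= 0.  As V is real, i Im W = (conj A - A) / 2 is Hermitian
   and |Im W| = |i Im W|.  For Hermitian T, tr |T| = tr (G T) where G, the sign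
   of T, satisfies -1 <= G <= 1; and tr (G X) <= tr X for such G and any X >= 0.
   Using X = conj A >= 0 for G and X = A for -G gives
   tr |Im W| <= (tr conj A + tr A) / 2 = tr A = tr V - tr Re W. *)

From HB Require Import structures.
From mathcomp Require Import all_boot all_order all_algebra.
From mathcomp Require Import ring.
Set Implicit Arguments. Unset Strict Implicit. Unset Printing Implicit Defensive.
Import Order.TTheory GRing.Theory Num.Theory Num.Def.
Local Open Scope ring_scope.

Lemma comm_mx_diag_map (R : idomainType) n (K : 'M[R]_n) (d : 'rV[R]_n)
    (g : R -> R) :
  K *m diag_mx d = diag_mx d *m K ->
  K *m diag_mx (map_mx g d) = diag_mx (map_mx g d) *m K.
Proof.
move=> /matrixP commKd; apply/matrixP => i j.
have := commKd i j; rewrite !mul_mx_diag !mul_diag_mx !mxE => eqKd.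
have [->|nzK] := eqVneq (K i j) 0; first by rewrite mulr0 mul0r.
by move: eqKd; rewrite mulrC => /(mulIf nzK) ->; rewrite mulrC.
Qed.

Lemma divC_sqrtC (C : numClosedFieldType) (x : C) : x / sqrtC x = sqrtC x.
Proof.
have [sx0|nz] := eqVneq (sqrtC x) 0; first by rewrite sx0 invr0 mulr0.
by rewrite -{1}(sqrtCK x) expr2 mulfK.
Qed.

Section Adjoint.
Variable C : numClosedFieldType.

Lemma adj_mxE m n (A : 'M[C]_(m, n)) : adj_mx A = map_mx conjC A^T.
Proof. by rewrite /adj_mx /conj_mx map_trmx. Qed.

Lemma adj_mxM m n p (A : 'M[C]_(m, n)) (B : 'M[C]_(n, p)) :
  adj_mx (A *m B) = adj_mx B *m adj_mx A.
Proof. by rewrite /adj_mx /conj_mx map_mxM trmx_mul. Qed.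

Lemma adj_mxK m n (A : 'M[C]_(m, n)) : adj_mx (adj_mx A) = A.
Proof. by apply/matrixP=> i j; rewrite !mxE conjCK. Qed.

Lemma adj_mxD m n (A B : 'M[C]_(m, n)) : adj_mx (A + B) = adj_mx A + adj_mx B.
Proof. by apply/matrixP=> i j; rewrite !mxE rmorphD. Qed.

Lemma adj_mxN m n (A : 'M[C]_(m, n)) : adj_mx (- A) = - adj_mx A.
Proof. by apply/matrixP=> i j; rewrite !mxE rmorphN. Qed.

Lemma adj_mxZ m n a (A : 'M[C]_(m, n)) : adj_mx (a *: A) = a^* *: adj_mx A.
Proof. by apply/matrixP=> i j; rewrite !mxE rmorphM. Qed.

Lemma adj_mx1 n : adj_mx (1%:M : 'M[C]_n) = 1%:M.
Proof. by rewrite /adj_mx /conj_mx map_mx1 trmx1. Qed.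

Lemma adj_diag_mx n (d : 'rV[C]_n) :
  adj_mx (diag_mx d) = diag_mx (map_mx conjC d).
Proof. by rewrite /adj_mx /conj_mx map_diag_mx tr_diag_mx. Qed.

Lemma conj_mxK m n (A : 'M[C]_(m, n)) : conj_mx (conj_mx A) = A.
Proof. by apply/matrixP=> i j; rewrite !mxE conjCK. Qed.

Lemma conj_mxM m n p (A : 'M[C]_(m, n)) (B : 'M[C]_(n, p)) :
  conj_mx (A *m B) = conj_mx A *m conj_mx B.
Proof. exact: map_mxM. Qed.

Lemma adj_conj_mx m n (A : 'M[C]_(m, n)) :
  adj_mx (conj_mx A) = conj_mx (adj_mx A).
Proof. by rewrite /adj_mx /conj_mx map_trmx. Qed.

Lemma hermitian_conj_mxE n (A : 'M[C]_n) : hermitian_mx A -> conj_mx A = A^T.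
Proof. by move=> hA; rewrite -[in RHS]hA /adj_mx trmxK. Qed.

Lemma hermitian_conj_mx n (A : 'M[C]_n) :
  hermitian_mx A -> hermitian_mx (conj_mx A).
Proof.
by move=> hA; rewrite /hermitian_mx /adj_mx conj_mxK hermitian_conj_mxE.
Qed.

Lemma unitarymx_mul_adj n (P : 'M[C]_n) :
  P \is unitarymx -> P *m adj_mx P = 1%:M.
Proof. by move/unitarymxP; rewrite adj_mxE. Qed.

Lemma unitarymx_adj_mul n (P : 'M[C]_n) :
  P \is unitarymx -> adj_mx P *m P = 1%:M.
Proof. by move/unitarymx_mul_adj/mulmx1C. Qed.

Lemma mul_adj_mx_diag_ge0 m n (A : 'M[C]_(m, n)) j : 0 <= (adj_mx A *m A) j j.
Proof.
by rewrite mxE; apply: sumr_ge0 => k _; rewrite !mxE mulrC mul_conjC_ge0.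
Qed.

End Adjoint.

Section PositiveSemidefinite.
Variable C : numClosedFieldType.

Lemma psd_mxtrace_ge0 m n (A : 'M[C]_n) (B : 'M[C]_(m, n)) :
  psd_mx A -> 0 <= \tr (B *m A *m adj_mx B).
Proof.
move=> [_ psdA]; apply: sumr_ge0 => i _.
have := psdA (adj_mx (row i B)); rewrite adj_mxK.
congr (_ <= _); rewrite !mxE; apply: eq_bigr => j _; rewrite !mxE.
by congr (_ * _); apply: eq_bigr => k _; rewrite !mxE.
Qed.

Lemma psd_conj_mx n (A : 'M[C]_n) : psd_mx A -> psd_mx (conj_mx A).
Proof.
move=> [hA psdA]; split; first exact: hermitian_conj_mx.
move=> v; have := psdA (conj_mx v).
have -> : adj_mx v *m conj_mx A *m v
          = conj_mx (adj_mx (conj_mx v) *m A *m conj_mx v).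
  by rewrite !conj_mxM adj_conj_mx !conj_mxK.
by rewrite [in X in _ -> X]mxE conjC_ge0.
Qed.

(* -1 <= G <= 1, with 1 - G^2 >= 0 witnessed by a factorization. *)
Definition hermitian_contraction n (G : 'M[C]_n) : Prop :=
  hermitian_mx G /\ exists Q : 'M[C]_n, 1%:M - G *m G = adj_mx Q *m Q.

Lemma hermitian_contractionN n (G : 'M[C]_n) :
  hermitian_contraction G -> hermitian_contraction (- G).
Proof.
move=> [hG [Q defQ]]; split; first by rewrite /hermitian_mx adj_mxN hG.
by exists Q; rewrite mulNmx mulmxN opprK.
Qed.

Lemma hermitian_contraction_unitary n (G P : 'M[C]_n) :
  hermitian_contraction G -> P \is unitarymx ->
  hermitian_contraction (adj_mx P *m G *m P).
Proof.
move=> [hG [Q defQ]] uP; split.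
  by rewrite /hermitian_mx !adj_mxM adj_mxK hG mulmxA.
exists (Q *m P); rewrite adj_mxM [RHS]mulmxA -[adj_mx P *m _ *m Q]mulmxA -defQ.
rewrite mulmxBr mulmxBl mulmx1 unitarymx_adj_mul // !mulmxA.
by rewrite -[_ *m P *m adj_mx P]mulmxA unitarymx_mul_adj // mulmx1.
Qed.

Lemma mxtrace_contraction_le n (G A : 'M[C]_n) :
  hermitian_contraction G -> psd_mx A -> \tr (G *m A) <= \tr A.
Proof.
move=> [hG [Q defQ]] psdA.
have trB (B : 'M[C]_n) : 0 <= \tr (adj_mx B *m B *m A).
  by rewrite -mulmxA mxtrace_mulC psd_mxtrace_ge0.
have twice : (1%:M - G) + (1%:M - G)
             = adj_mx (1%:M - G) *m (1%:M - G) + adj_mx Q *m Q.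
  rewrite -defQ adj_mxD adj_mxN adj_mx1 hG mulmxBl !mulmxBr !mul1mx mulmx1.
  by apply/matrixP=> i j; rewrite !mxE; ring.
have := congr1 (fun M => \tr (M *m A)) twice.
rewrite /= mulmxDl [in X in _ = X]mulmxDl !mxtraceD -mulr2n => two_tr.
rewrite -subr_ge0 -(pmulrn_lge0 _ (ltn0Sn 1)).
have -> : \tr A - \tr (G *m A) = \tr ((1%:M - G) *m A).
  by rewrite mulmxBl mul1mx raddfB.
by rewrite two_tr addr_ge0.
Qed.

End PositiveSemidefinite.

Section SignOfHermitian.
Variable C : numClosedFieldType.

Lemma hermitian_sqr_diag_sign n (K : 'M[C]_n) (mu : 'rV[C]_n) :
  hermitian_mx K -> K *m K = diag_mx mu ->
  exists2 G, hermitian_contraction G &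
    \tr (G *m K) = \tr (diag_mx (map_mx sqrtC mu)).
Proof.
move=> hK KK.
have mu_ge0 j : 0 <= mu 0 j.
  by have := mul_adj_mx_diag_ge0 K j; rewrite hK KK mxE eqxx mulr1n.
(* G := K |K|^-1 with the convention 0^-1 = 0, so that 1 - G^2 is the
   projection onto the kernel of K. *)
pose f := map_mx (fun x => (sqrtC x)^-1) mu.
have commKf : K *m diag_mx f = diag_mx f *m K.
  by apply: comm_mx_diag_map; rewrite -KK mulmxA.
exists (K *m diag_mx f); last first.
  rewrite -mulmxA -commKf mulmxA KK mulmx_diag; congr (\tr (diag_mx _)).
  by apply/matrixP => i j; rewrite !mxE (ord1 i) divC_sqrtC.
split.
  rewrite /hermitian_mx adj_mxM hK adj_diag_mx commKf; congr (diag_mx _ *m _).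
  apply/matrixP => i j; rewrite !mxE (ord1 i) conj_Creal //.
  by rewrite realV ger0_real ?sqrtC_ge0.
exists (diag_mx (map_mx (fun x => (x == 0)%:R) mu)).
rewrite adj_diag_mx mulmx_diag mulmxA -[K *m diag_mx f *m K]mulmxA -commKf.
rewrite mulmxA KK !mulmx_diag; apply/matrixP => i j; rewrite !mxE.
case: (i == j); last by rewrite !mulr0n subr0.
rewrite !mulr1n divC_sqrtC.
have [->|nz] := eqVneq (mu 0 i) 0.
  by rewrite sqrtC0 mul0r subr0 conjC1 mulr1.
by rewrite divff ?sqrtC_eq0 // subrr rmorph0 mulr0.
Qed.

Lemma abs_mxZ n a (A : 'M[C]_n) : a^* * a = 1 -> abs_mx (a *: A) = abs_mx A.
Proof.
by move=> aa; rewrite /abs_mx adj_mxZ -scalemxAl -scalemxAr scalerA aa scale1r.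
Qed.

Lemma mxtrace_abs_hermitian n (T : 'M[C]_n) : hermitian_mx T ->
  exists2 G, hermitian_contraction G & \tr (abs_mx T) = \tr (G *m T).
Proof.
move=> hT; rewrite /abs_mx.
set M := adj_mx T *m T; set P := spectralmx M; set mu := spectral_diag M.
have uP : P \is unitarymx := spectral_unitarymx M.
have invP : invmx P = adj_mx P by rewrite invmx_unitary // adj_mxE.
have normM : M \is normalmx.
  by apply/normalmxP; rewrite -adj_mxE /M adj_mxM adj_mxK.
have defM : M = adj_mx P *m diag_mx mu *m P.
  by rewrite -invP; exact/orthomx_spectralP.
pose K := P *m T *m adj_mx P.
have hK : hermitian_mx K by rewrite /hermitian_mx /K !adj_mxM adj_mxK hT mulmxA.
have KK : K *m K = diag_mx mu.
  rewrite /K !mulmxA -[P *m T *m adj_mx P *m P]mulmxA unitarymx_adj_mul //.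
  rewrite mulmx1 -[P *m T *m T]mulmxA -{1}hT -/M defM !mulmxA.
  by rewrite unitarymx_mul_adj // mul1mx -mulmxA unitarymx_mul_adj // mulmx1.
have [G0 cG0 trG0] := hermitian_sqr_diag_sign hK KK.
exists (adj_mx P *m G0 *m P); first exact: hermitian_contraction_unitary.
rewrite mxtrace_mulC mulmxA invP unitarymx_mul_adj // mul1mx -trG0 /K.
by rewrite -!mulmxA [in RHS]mxtrace_mulC !mulmxA.
Qed.

End SignOfHermitian.

Theorem lemma3 (C : numClosedFieldType) (d : nat) (V W : 'M[C]_d) :
  real_symmetric_mx V -> hermitian_mx W -> psd_mx (V - W) ->
  \tr (Re_mx W) + \tr (abs_mx (Im_mx W)) <= \tr V.
Proof.
move=> [Vreal _] hW psdA; set A := V - W in psdA.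
have hA : hermitian_mx A by case: psdA.
have conjV : conj_mx V = V.
  by apply/matrixP=> i j; rewrite mxE conj_Creal ?Vreal.
have half_double (x : C) : 2^-1 * (x + x) = x by field.
have trRe : \tr (Re_mx W) = \tr W.
  rewrite /Re_mx mxtraceZ mxtraceD hermitian_conj_mxE //.
  by rewrite mxtrace_tr half_double.
pose T := 2^-1 *: (conj_mx A - A).
have hT : hermitian_mx T.
  rewrite /hermitian_mx /T adj_mxZ adj_mxD adj_mxN.
  by rewrite (hermitian_conj_mx hA) hA fmorphV rmorph_nat.
have absIm : abs_mx (Im_mx W) = abs_mx T.
  have -> : T = 'i *: Im_mx W.
    rewrite /T /Im_mx scalerA invfM mulrA mulrAC mulfV ?neq0Ci // mul1r.
    congr (_ *: _); rewrite /A /conj_mx raddfB /= -/(conj_mx V) conjV.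
    by rewrite opprB addrC addrA subrK.
  by rewrite abs_mxZ // conjCi mulNr -expr2 sqrCi opprK.
have [G cG trG] := mxtrace_abs_hermitian hT.
have le_conjA := mxtrace_contraction_le cG (psd_conj_mx psdA).
rewrite [in X in _ <= X]hermitian_conj_mxE // mxtrace_tr in le_conjA.
have le_A := mxtrace_contraction_le (hermitian_contractionN cG) psdA.
have -> : \tr V = \tr W + \tr A by rewrite raddfB addrC subrK.
rewrite trRe lerD2l absIm trG /T -scalemxAr mxtraceZ mulmxBr -mulNmx mxtraceD.
by rewrite -[leRHS]half_double ler_pM2l ?invr_gt0 ?ltr0n // lerD.
Qed.
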